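(* Let $(\mathfrak g,[-,-])$ be a Lie algebra, $(\rho,V)$ a representation, and $T:V\to\mathfrak g$ an admissible anti-$\mathcal O$-operator of $(\mathfrak g,[-,-])$ associated to $(\rho,V)$. Then $T$ is strong. Moreover, $(V,\circ)$ with $u\circ v=-\rho(T(u))v$ is an admissible Novikov algebra.
   Context: All vector spaces are finite-dimensional over a field $\mathbb F$ of characteristic $0$. A linear map $T:V\to\mathfrak g$ is an anti-$\mathcal O$-operator associated to $(\rho,V)$ if $[T(u),T(v)]=T(\rho(T(v))u-\rho(T(u))v)$ for all $u,v\in V$; it is strong if $\rho([T(u),T(v)])w+\rho([T(v),T(w)])u+\rho([T(w),T(u)])v=0$ for all $u,v,w$; it is admissible if $2\rho(T(u))\rho(T(v))w-2\rho(T(u))\rho(T(w))v=\rho(T(\rho(T(u))v))w-\rho(T(\rho(T(u))w))v$ for all $u,v,w\in V$. For a bilinear operation $\circ$ write $[x,y]=x\circ y-y\circ x$; an admissible Novikov algebra is $(A,\circ)$ with $x\circ(y\circ z)-y\circ(x\circ z)=[y,x]\circ z$ and $2x\circ[y,z]=(x\circ y)\circ z-(x\circ z)\circ y$ for all $x,y,z$. *)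

From HB Require Import structures.
From mathcomp Require Import all_boot all_order all_algebra.
Set Implicit Arguments. Unset Strict Implicit. Unset Printing Implicit Defensive.
Import GRing.Theory.
Local Open Scope ring_scope.

Definition bilinear_map (R : pzRingType) (U V W : lmodType R)
  (f : U -> V -> W) : Prop :=
  (forall (a : R) (x y : U) (z : V), f (a *: x + y) z = a *: f x z + f y z) /\
  (forall (a : R) (x : U) (y z : V), f x (a *: y + z) = a *: f x y + f x z).

Definition is_lie_algebra (R : pzRingType) (g : lmodType R)
  (br : g -> g -> g) : Prop :=
  [/\ bilinear_map br,
      (forall x, br x x = 0) &
      (forall x y z, br x (br y z) + br y (br z x) + br z (br x y) = 0)].

Definition is_representation (R : pzRingType) (g V : lmodType R)
  (br : g -> g -> g) (rho : g -> V -> V) : Prop :=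
  bilinear_map rho /\
  (forall x y v, rho (br x y) v = rho x (rho y v) - rho y (rho x v)).

Definition anti_O_operator (R : pzRingType) (g V : lmodType R)
  (br : g -> g -> g) (rho : g -> V -> V) (T : V -> g) : Prop :=
  forall u v, br (T u) (T v) = T (rho (T v) u - rho (T u) v).

Definition strong_op (R : pzRingType) (g V : lmodType R)
  (br : g -> g -> g) (rho : g -> V -> V) (T : V -> g) : Prop :=
  forall u v w, rho (br (T u) (T v)) w + rho (br (T v) (T w)) u
                + rho (br (T w) (T u)) v = 0.

Definition admissible_op (R : pzRingType) (g V : lmodType R)
  (rho : g -> V -> V) (T : V -> g) : Prop :=
  forall u v w,
    2%:R *: rho (T u) (rho (T v) w) - 2%:R *: rho (T u) (rho (T w) v)
    = rho (T (rho (T u) v)) w - rho (T (rho (T u) w)) v.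

Definition commut (R : pzRingType) (A : lmodType R) (circ : A -> A -> A)
  (x y : A) : A := circ x y - circ y x.

Definition admissible_novikov (R : pzRingType) (A : lmodType R)
  (circ : A -> A -> A) : Prop :=
  [/\ bilinear_map circ,
      (forall x y z, circ x (circ y z) - circ y (circ x z)
                     = circ (commut circ y x) z) &
      (forall x y z, 2%:R *: circ x (commut circ y z)
                     = circ (circ x y) z - circ (circ x z) y)].

From HB Require Import structures.
From mathcomp Require Import all_boot all_order all_algebra.
Set Implicit Arguments.
Unset Strict Implicit.
Unset Printing Implicit Defensive.

Import GRing.Theory.
Local Open Scope ring_scope.

(* Put u o v := - rho (T u) v.  The representation and anti-O-operator
   identities give rho [T u, T v] w = [v, u] o w, which is the first Novikov
   identity, and admissibility of T is literally the second one.  In any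
   algebra satisfying both identities the cyclic sum S of [x, y] o z obeys
   S = - 2 S: summing the second identity cyclically, the first identity turns
   its left side into - 2 S while bilinearity turns its right side into S.
   Hence 3 S = 0, which in characteristic 0 is the strong condition. *)

Section BilinearMap.
Variables (R : pzRingType) (U W X : lmodType R) (f : U -> W -> X).
Hypothesis f_bilinear : bilinear_map f.

Lemma bilinear_map_subl x y z : f (x - y) z = f x z - f y z.
Proof. by rewrite addrC -scaleN1r f_bilinear.1 scaleN1r addrC. Qed.

Lemma bilinear_map_subr x y z : f x (y - z) = f x y - f x z.
Proof. by rewrite addrC -scaleN1r f_bilinear.2 scaleN1r addrC. Qed.

Lemma bilinear_map_oppl x z : f (- x) z = - f x z.
Proof.
have f0z : f 0 z = 0 by rewrite -(subrr x) bilinear_map_subl subrr.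
by rewrite -sub0r bilinear_map_subl f0z sub0r.
Qed.

Lemma bilinear_map_oppr x z : f x (- z) = - f x z.
Proof.
have fx0 : f x 0 = 0 by rewrite -(subrr z) bilinear_map_subr subrr.
by rewrite -sub0r bilinear_map_subr fx0 sub0r.
Qed.

End BilinearMap.

Lemma addrB_cycle3 (M : zmodType) (p1 p2 p3 q1 q2 q3 : M) :
  (p1 - q1) + (p2 - q2) + (p3 - q3) = (p1 - q2) + (p2 - q3) + (p3 - q1).
Proof. by rewrite !addrA (ACl (1*4*3*6*5*2)%AC). Qed.

Section AdmissibleNovikov.
Variables (R : pzRingType) (A : lmodType R) (circ : A -> A -> A).
Hypothesis circ_novikov : admissible_novikov circ.

Lemma admissible_novikov_commut_cycle x y z :
  (circ (commut circ x y) z + circ (commut circ y z) x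
   + circ (commut circ z x) y) *+ 3 = 0.
Proof.
have [circ_bilinear left_commut admissible] := circ_novikov.
set S := _ + _ + _.
have S_right : S = (circ (circ x y) z - circ (circ x z) y)
                   + (circ (circ y z) x - circ (circ y x) z)
                   + (circ (circ z x) y - circ (circ z y) x).
  by rewrite /S /commut !(bilinear_map_subl circ_bilinear) -addrB_cycle3.
have S_left : - S = (circ x (circ y z) - circ x (circ z y))
                    + (circ y (circ z x) - circ y (circ x z))
                    + (circ z (circ x y) - circ z (circ y x)).
  by rewrite /S -!left_commut 2!opprD !opprB -addrB_cycle3.
have admissible2 u v w :
    (circ u (circ v w) - circ u (circ w v)) *+ 2
    = circ (circ u v) w - circ (circ u w) v.
  by rewrite -admissible -scaler_nat -(bilinear_map_subr circ_bilinear).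
have S_twice : S = - S *+ 2.
  by rewrite {1}S_right -!admissible2 -!mulrnDl -S_left.
by rewrite mulrSr {2}S_twice mulNrn addrN.
Qed.

End AdmissibleNovikov.

Section AntiOOperator.
Variables (R : pzRingType) (g V : lmodType R).
Variables (br : g -> g -> g) (rho : g -> V -> V) (T : {linear V -> g}).
Hypotheses (rho_rep : is_representation br rho)
           (T_anti_O : anti_O_operator br rho T).

Let rho_bilinear : bilinear_map rho := rho_rep.1.

Definition anti_O_product (u v : V) : V := - rho (T u) v.

Lemma rho_bracket_anti_O u v w :
  rho (br (T u) (T v)) w = anti_O_product (commut anti_O_product v u) w.
Proof.
by rewrite T_anti_O /anti_O_product /commut -opprD raddfN
  (bilinear_map_oppl rho_bilinear) opprK.
Qed.

Lemma anti_O_product_bilinear : bilinear_map anti_O_product.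
Proof.
split=> a x y z; rewrite /anti_O_product.
- by rewrite linearP rho_bilinear.1 opprD scalerN.
- by rewrite rho_bilinear.2 opprD scalerN.
Qed.

Lemma anti_O_product_left_commut x y z :
  anti_O_product x (anti_O_product y z) - anti_O_product y (anti_O_product x z)
  = anti_O_product (commut anti_O_product y x) z.
Proof.
by rewrite -rho_bracket_anti_O rho_rep.2 /anti_O_product
  !(bilinear_map_oppr rho_bilinear) !opprK.
Qed.

Lemma admissible_anti_O_novikov :
  admissible_op rho T -> admissible_novikov anti_O_product.
Proof.
move=> T_admissible; split=> [|x y z|x y z].
- exact: anti_O_product_bilinear.
- exact: anti_O_product_left_commut.
rewrite /anti_O_product /commut -opprD (bilinear_map_oppr rho_bilinear).
rewrite (bilinear_map_subr rho_bilinear) opprK !raddfN.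
by rewrite !(bilinear_map_oppl rho_bilinear) !opprK scalerBr.
Qed.

End AntiOOperator.

Lemma admissible_anti_O_strong (F : fieldType) (g V : lmodType F)
    (br : g -> g -> g) (rho : g -> V -> V) (T : {linear V -> g}) :
  (3%:R : F) != 0 -> is_representation br rho -> anti_O_operator br rho T ->
  admissible_op rho T -> strong_op br rho T.
Proof.
move=> three_neq0 rho_rep T_anti_O T_admissible u v w.
have := admissible_novikov_commut_cycle
  (admissible_anti_O_novikov rho_rep T_anti_O T_admissible) v u w.
rewrite !(rho_bracket_anti_O rho_rep T_anti_O) addrAC => /eqP.
by rewrite -scaler_nat scaler_eq0 (negbTE three_neq0) => /eqP.
Qed.

Theorem proposition3p15 (F : fieldType) (char0 : [pchar F] =i pred0)
  (g V : vectType F) (br : g -> g -> g) (rho : g -> V -> V)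
  (T : {linear V -> g}) :
  is_lie_algebra br -> is_representation br rho ->
  anti_O_operator br rho T -> admissible_op rho T ->
  strong_op br rho T /\ admissible_novikov (fun u v : V => - rho (T u) v).
Proof.
move=> _ rho_rep T_anti_O T_admissible.
have three_neq0 : (3%:R : F) != 0 by move/(pcharf0P F): char0 => ->.
split; first exact: admissible_anti_O_strong.
exact: (admissible_anti_O_novikov rho_rep T_anti_O T_admissible).
Qed.
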